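(* Let $d\ge 2$. For every integer $N$ there exist finite point sets $P,Q\subset\mathbb{R}^d$ that are not $(1,2)$-separable, but such that every pair of subsets $P^*\subseteq P$, $Q^*\subseteq Q$ with $|P^*|+|Q^*|\le N$ is $(1,2)$-separable. In particular, $(1,2)$-separability does not have the Helly-type property in $\mathbb{R}^d$ (its Helly number is infinite).
   Context: Finite sets $P,Q\subset\mathbb{R}^d$ are $(b,c)$-separable if there exist convex sets $S_1,\dots,S_b$ and $T_1,\dots,T_c$ with $S=\bigcup_i S_i$, $T=\bigcup_j T_j$, $S\cap T=\emptyset$, and either ($P\subseteq S$ and $Q\subseteq T$) or ($Q\subseteq S$ and $P\subseteq T$). A predicate $F$ on pairs of finite point sets has the Helly-type property in $\mathbb{R}^d$ if there is a finite $m$ such that whenever $F(P,Q)$ fails there exist $P^*\subseteq P$, $Q^*\subseteq Q$ with $|P^*|+|Q^*|\le m$ for which $F(P^*,Q^* )$ fails. *)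

From HB Require Import structures.
From mathcomp Require Import all_boot all_order all_algebra.
From mathcomp Require Import finmap.
From mathcomp Require Import reals.
Set Implicit Arguments. Unset Strict Implicit. Unset Printing Implicit Defensive.
Import Order.TTheory GRing.Theory Num.Theory.
Local Open Scope ring_scope.
Definition convex_set (R : realType) (d : nat) (S : 'rV[R]_d -> Prop) : Prop :=
  forall (x y : 'rV[R]_d) (t : R), S x -> S y -> 0 <= t -> t <= 1 ->
    S (t *: x + (1 - t) *: y).

Local Open Scope fset_scope.

Definition separable (R : realType) (d b c : nat) (P Q : {fset 'rV[R]_d}) : Prop :=
  exists (S : 'I_b -> 'rV[R]_d -> Prop) (T : 'I_c -> 'rV[R]_d -> Prop),
    (forall i, convex_set (S i)) /\ (forall j, convex_set (T j)) /\
    let SU := fun x => exists i, S i x in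
    let TU := fun x => exists j, T j x in
    (forall x, SU x -> TU x -> False) /\
    ( ((forall x, x \in P -> SU x) /\ (forall x, x \in Q -> TU x)) \/
      ((forall x, x \in Q -> SU x) /\ (forall x, x \in P -> TU x)) ).

Definition helly_type (R : realType) (d : nat)
  (F : {fset 'rV[R]_d} -> {fset 'rV[R]_d} -> Prop) : Prop :=
  exists m : nat, forall P Q : {fset 'rV[R]_d}, ~ F P Q ->
    exists P' Q' : {fset 'rV[R]_d},
      (P' `<=` P) /\ (Q' `<=` Q) /\ (#|` P'| + #|` Q'| <= m)%N /\ ~ F P' Q'.

From HB Require Import structures.
From mathcomp Require Import all_boot all_order all_algebra.
From mathcomp Require Import finmap.
From mathcomp Require Import reals trigo.
From mathcomp Require Import ring lra zify.
From Stdlib Require Import ClassicalEpsilon.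
Set Implicit Arguments. Unset Strict Implicit. Unset Printing Implicit Defensive.
Import Order.TTheory GRing.Theory Num.Theory.
Local Open Scope ring_scope.

(* Fix m and n = 2m+1, and work in the plane spanned by the first two
   coordinates of R^d.  Q is the set of vertices v_0, ..., v_(n-1) of a regular
   n-gon on the unit circle, and P the set of midpoints of the "long chords"
   [v_k, v_(k+m mod n)] of the star polygon {n/m}.
   - P, Q are not (1,2)-separable: if Q lies in one convex set, so does P;
     if P lies in one convex set S and Q in T_1 u T_2 disjoint from S, then the
     two ends of every long chord lie in different T_j, i.e. the map
     k |-> k+m (mod n) flips a 2-colouring of Z/n, impossible for n odd.
   - If some vertex v_j is missing from Q' <= Q, then P and Q \ {v_j} are
     separated by a wedge opening towards v_j (containing all midpoints) and
     the two open half-planes complementary to its sides; so any P' <= P, Q' <= Q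
     with |Q'| < n are (1,2)-separable.
   Taking m = N gives the first claim, and the failure of the Helly-type
   property is a formal consequence. *)

Section Convexity.
Variables (R : realType) (d : nat) (f : 'rV[R]_d -> R).
Hypothesis f_affine : forall (x y : 'rV[R]_d) (t : R),
  f (t *: x + (1 - t) *: y) = t * f x + (1 - t) * f y.

Lemma convex_gt (c : R) : convex_set (fun x => c < f x).
Proof.
move=> x y t hx hy t0 t1; rewrite f_affine.
have [->|t_neq0] := eqVneq t 0; first lra.
have t_gt0 : 0 < t by rewrite lt_neqAle eq_sym t_neq0.
have : 0 < t * (f x - c) by apply: mulr_gt0; lra.
have : 0 <= (1 - t) * (f y - c) by apply: mulr_ge0; lra.
nra.
Qed.

Lemma convex_le (c : R) : convex_set (fun x => f x <= c).
Proof.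
move=> x y t hx hy t0 t1; rewrite f_affine.
have : 0 <= t * (c - f x) by apply: mulr_ge0; lra.
have : 0 <= (1 - t) * (c - f y) by apply: mulr_ge0; lra.
nra.
Qed.
End Convexity.

Lemma convex_setI (R : realType) (d : nat) (S T : 'rV[R]_d -> Prop) :
  convex_set S -> convex_set T -> convex_set (fun x => S x /\ T x).
Proof. by move=> cS cT x y t [Sx Tx] [Sy Ty] t0 t1; split; [apply: cS | apply: cT]. Qed.

Section Residues.
Local Open Scope nat_scope.

(* The combinatorial core of non-separability: on Z/n with n odd, no
   2-colouring b is flipped by a translation k |-> k + m, since iterating the
   translation n times returns to the start after an odd number of flips. *)
Lemma no_flipping_colouring (n m : nat) (b : nat -> bool) : odd n ->
  ~ (forall k, k < n -> b ((k + m) %% n) = ~~ b k).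
Proof.
move=> odd_n flip.
have n_gt0 : 0 < n by case: (n) odd_n.
have orbit t : b ((t * m) %% n) = b 0 (+) odd t.
  elim: t => [|t IH]; first by rewrite mul0n mod0n addbF.
  rewrite mulSn -modnDmr addnC flip ?ltn_mod // IH /=.
  by case: (b 0); case: (odd t).
by have := orbit n; rewrite mulnC modnMl odd_n; case: (b 0).
Qed.

Lemma circ_offset (n i j : nat) : i < n -> j < n -> i != j ->
  exists2 r, 0 < r < n & i = (j + r) %% n.
Proof.
move=> hi hj /eqP hij; have [ji|ij] := ltnP j i.
- by exists (i - j); [lia | rewrite subnKC ?modn_small // ltnW].
- exists (i + n - j); first lia.
  have -> : j + (i + n - j) = i + n by lia.
  by rewrite modnDr modn_small.
Qed.
End Residues.

(* The mean of cos (A - h) and cos (A + h) is cos A cos h <= cos h. *)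
Lemma cos_mean_le (R : realType) (A h : R) :
  0 <= cos h -> cos (A - h) / 2 + cos (A + h) / 2 <= cos h.
Proof.
move=> cos_h_ge0; rewrite cosB cosD.
have : 0 <= (1 - cos A) * cos h by rewrite mulr_ge0 // subr_ge0 cos_le1.
nra.
Qed.

(* Trigonometry of the regular n-gon, n = 2m+1, with central angle alpha.
   The threshold cos (m alpha / 2) is the value of cos at the endpoints of the
   arc of length m alpha centred at 0. *)
Section RegularPolygon.
Variables (R : realType) (m : nat).
Local Notation n := m.*2.+1.

Definition alpha : R := pi *+ 2 / n%:R.
Definition threshold : R := cos (m%:R * alpha / 2).

Lemma natr_n : n%:R = 2 * m%:R + 1 :> R.
Proof. by rewrite -addn1 -muln2 natrD natrM mulrC. Qed.

Lemma alpha_gt0 : 0 < alpha.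
Proof. by rewrite divr_gt0 // mulrn_wgt0 // pi_gt0. Qed.

Lemma alpha_turn : alpha * (2 * m%:R + 1) = pi *+ 2.
Proof. by rewrite /alpha -natr_n mulfVK // pnatr_eq0. Qed.

(* Half of an arc of m edges lies in [0, pi/2], half of one of m+1 edges is
   at most pi: these are the ranges where cos is monotone, resp. nonnegative. *)
Lemma half_arc_bounds :
  0 <= m%:R * alpha / 2 <= pi / 2 /\ (m%:R + 1) * alpha / 2 <= pi.
Proof.
have turn := alpha_turn; rewrite mulrDr mulr1 mulr2n in turn.
have := alpha_gt0; have := pi_gt0 R.
have : 0 <= m%:R * alpha by rewrite mulr_ge0 // ltW // alpha_gt0.
by move=> *; split; [apply/andP; split|]; lra.
Qed.

Lemma threshold_ge0 : 0 <= threshold.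
Proof.
have [/andP[h0 h1] _] := half_arc_bounds; have hp := pi_gt0 R.
by apply: cos_ge0_pihalf; apply/andP; split; lra.
Qed.

Lemma cos_mod_n (k : nat) (x : R) :
  cos ((k %% n)%N%:R * alpha + x) = cos (k%:R * alpha + x).
Proof.
have -> : k%:R * alpha + x = (k %% n)%N%:R * alpha + x + pi *+ 2 *+ (k %/ n).
  by rewrite {1}(divn_eq k n) natrD natrM natr_n -alpha_turn -mulr_natr; ring.
by rewrite (periodicn (@cosD2pi R)).
Qed.

Lemma threshold_lt_cos (y : R) : `|y| < m%:R / 2 -> threshold < cos (y * alpha).
Proof.
move=> hy; have [/andP[h0 h1] _] := half_arc_bounds.
have ha := alpha_gt0; have hp := pi_gt0 R.
rewrite /threshold -(cos_norm (y * _)) normrM (gtr0_norm ha).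
have h2 : `|y| * alpha < m%:R * alpha / 2 by rewrite mulrAC ltr_pM2r.
have h3 : 0 <= `|y| * alpha by rewrite mulr_ge0 // ltW.
by rewrite ltr_cos // in_itv /=; apply/andP; split; lra.
Qed.

Lemma cos_lt_threshold : cos ((m%:R + 1) * alpha / 2) < threshold.
Proof.
have [/andP[h0 h1] h2] := half_arc_bounds; have ha := alpha_gt0.
have hp := pi_gt0 R.
by rewrite ltr_cos; [nra | rewrite in_itv /=; apply/andP; split; nra..].
Qed.
End RegularPolygon.

Section Plane.
Variables (R : realType) (d' : nat).
Local Notation V := 'rV[R]_(d'.+2).

Definition plane_pt (a b : R) : V :=
  \row_(i < d'.+2) (if val i == 0%N then a else if val i == 1%N then b else 0).

Definition lin (phi : R) (x : V) : R :=
  x ord0 ord0 * cos phi + x ord0 (@Ordinal d'.+2 1 isT) * sin phi.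

Lemma lin_plane_pt (phi a b : R) : lin phi (plane_pt a b) = a * cos phi + b * sin phi.
Proof. by rewrite /lin !mxE. Qed.

Lemma lin_affine (phi : R) (x y : V) (t : R) :
  lin phi (t *: x + (1 - t) *: y) = t * lin phi x + (1 - t) * lin phi y.
Proof. rewrite /lin !mxE; ring. Qed.
End Plane.

Section Construction.
Variables (R : realType) (d' m : nat).
Local Notation n := m.*2.+1.
Local Notation V := 'rV[R]_(d'.+2).
Local Notation alpha := (alpha R m).
Local Notation threshold := (threshold R m).

Definition vertex (k : nat) : V :=
  plane_pt d' (cos (k%:R * alpha)) (sin (k%:R * alpha)).

Definition chord_mid (k : nat) : V :=
  (1 / 2) *: vertex k + (1 - 1 / 2) *: vertex ((k + m) %% n)%N.

Lemma lin_vertex (phi : R) (k : nat) : lin phi (vertex k) = cos (k%:R * alpha - phi).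
Proof. by rewrite lin_plane_pt cosB. Qed.

Lemma chord_mid_in (U : V -> Prop) (k : nat) : convex_set U ->
  U (vertex k) -> U (vertex ((k + m) %% n)%N) -> U (chord_mid k).
Proof. by move=> cU hx hy; apply: cU => //; lra. Qed.

(* In every direction, each chord midpoint lies at most at the threshold:
   the chord spans the angle m alpha, so its midpoint is the vertex mean. *)
Lemma lin_chord_mid_le (phi : R) (k : nat) : lin phi (chord_mid k) <= threshold.
Proof.
rewrite /chord_mid lin_affine !lin_vertex cos_mod_n.
have := cos_mean_le (k%:R * alpha - phi + m%:R * alpha / 2) (threshold_ge0 R m).
have -> : k%:R * alpha - phi + m%:R * alpha / 2 + m%:R * alpha / 2 =
          (k + m)%:R * alpha - phi by rewrite natrD; field.
by rewrite addrK /threshold; lra.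
Qed.

(* Outer normals of the two sides of the wedge around v_j: the directions of
   the midpoints of the arcs of m+1 edges on either side of v_j. *)
Definition phiL (j : nat) : R := (j%:R + (m%:R + 1) / 2) * alpha.
Definition phiR (j : nat) : R := (j%:R - (m%:R + 1) / 2) * alpha.

Lemma vertex_beyond_wedge (i j : nat) : (i < n)%N -> (j < n)%N -> i != j ->
  threshold < lin (phiL j) (vertex i) \/ threshold < lin (phiR j) (vertex i).
Proof.
move=> hi hj hij; have [r /andP[r_gt0 r_lt_n] ->] := circ_offset hi hj hij.
rewrite !lin_vertex !cos_mod_n /phiL /phiR natrD.
have r_ge1 : 1 <= r%:R :> R by rewrite ler1n.
have r_le : r%:R <= 2 * m%:R :> R by rewrite ltnS in r_lt_n; rewrite -natrM mul2n ler_nat.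
have [r_le_m|m_lt_r] := leqP r m.
- left; have r_le_m' : r%:R <= m%:R :> R by rewrite ler_nat.
  have -> : (j%:R + r%:R) * alpha - (j%:R + (m%:R + 1) / 2) * alpha =
            (r%:R - (m%:R + 1) / 2) * alpha by field.
  by apply: threshold_lt_cos; rewrite ltr_norml; apply/andP; split; lra.
- right; have m_lt_r' : m%:R + 1 <= r%:R :> R by rewrite natr1 ler_nat.
  have -> : (j%:R + r%:R) * alpha - (j%:R - (m%:R + 1) / 2) * alpha =
            (r%:R + (m%:R + 1) / 2 - (2 * m%:R + 1)) * alpha + pi *+ 2.
    by rewrite -(alpha_turn R m); field.
  rewrite cosD2pi; apply: threshold_lt_cos.
  by rewrite ltr_norml; apply/andP; split; lra.
Qed.

Lemma vertex_in_wedge (j : nat) :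
  lin (phiL j) (vertex j) < threshold /\ lin (phiR j) (vertex j) < threshold.
Proof.
rewrite !lin_vertex /phiL /phiR.
have -> : j%:R * alpha - (j%:R + (m%:R + 1) / 2) * alpha =
          - ((m%:R + 1) * alpha / 2) by field.
have -> : j%:R * alpha - (j%:R - (m%:R + 1) / 2) * alpha =
          (m%:R + 1) * alpha / 2 by field.
by rewrite cosN; split; exact: cos_lt_threshold.
Qed.

(* Distinct indices give distinct vertices: the wedge of v_j excludes the others. *)
Lemma vertex_inj (i j : nat) : (i < n)%N -> (j < n)%N -> vertex i = vertex j -> i = j.
Proof.
move=> hi hj e; apply/eqP; apply/negPn/negP => hij.
have [inL inR] := vertex_in_wedge j.
by case: (vertex_beyond_wedge hi hj hij); rewrite e => h;
  [have := lt_trans h inL | have := lt_trans h inR]; rewrite ltxx.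
Qed.

Local Open Scope fset_scope.

Definition vertices : {fset V} := [fset x in map vertex (iota 0 n)].
Definition midpoints : {fset V} := [fset x in map chord_mid (iota 0 n)].

Lemma in_vertices (x : V) : x \in vertices <-> exists2 k, (k < n)%N & x = vertex k.
Proof.
rewrite /vertices in_fset; split.
- by move=> /mapP [k]; rewrite mem_iota add0n => hk ->; exists k.
- by move=> [k hk ->]; apply/mapP; exists k => //; rewrite mem_iota add0n.
Qed.

Lemma in_midpoints (x : V) : x \in midpoints <-> exists2 k, (k < n)%N & x = chord_mid k.
Proof.
rewrite /midpoints in_fset; split.
- by move=> /mapP [k]; rewrite mem_iota add0n => hk ->; exists k.
- by move=> [k hk ->]; apply/mapP; exists k => //; rewrite mem_iota add0n.
Qed.

Lemma card_vertices : #|` vertices| = n.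
Proof.
rewrite /vertices card_fseq undup_id ?size_map ?size_iota //.
rewrite map_inj_in_uniq ?iota_uniq // => i j.
rewrite !mem_iota !add0n; exact: vertex_inj.
Qed.

Lemma I2_cases (j : 'I_2) : j = ord0 \/ j = ord_max.
Proof. by case: j => [[|[|//]]] ?; [left|right]; apply/val_inj. Qed.

Lemma not_separable_midpoints_vertices : ~ separable 1 2 midpoints vertices.
Proof.
move=> [S [T [convS [convT /= [disj [[inS inT]|[inS inT]]]]]]].
- pose colour k := if excluded_middle_informative (T ord0 (vertex k)) then true else false.
  apply: (@no_flipping_colouring n m colour) => [|k hk]; first by rewrite /= odd_double.
  have S_mid : exists i, S i (chord_mid k) by apply/inS/in_midpoints; exists k.
  have [jx hx] : exists j, T j (vertex k) by apply/inT/in_vertices; exists k.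
  have [jy hy] : exists j, T j (vertex ((k + m) %% n)%N).
    by apply/inT/in_vertices; exists ((k + m) %% n)%N; rewrite ?ltn_mod.
  (* a chord with both ends in the same T_j would put its midpoint in T_j *)
  rewrite /colour; case: excluded_middle_informative => hy0;
    case: excluded_middle_informative => hx0 //=; exfalso; apply: (disj _ S_mid).
  + by exists ord0; exact: chord_mid_in (convT ord0) hx0 hy0.
  + have [ex|ex] := I2_cases jx; first by case: hx0; rewrite -ex.
    have [ey|ey] := I2_cases jy; first by case: hy0; rewrite -ey.
    by exists ord_max; rewrite -ex; apply: chord_mid_in (convT jx) hx _; rewrite ex -ey.
- (* the single convex set containing Q contains the midpoint of a chord *)
  have [i0 h0] : exists i, S i (vertex 0) by apply/inS/in_vertices; exists 0%N.
  have [i1 h1] : exists i, S i (vertex ((0 + m) %% n)%N).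
    by apply/inS/in_vertices; exists ((0 + m) %% n)%N; rewrite ?ltn_mod.
  have T_mid : exists j, T j (chord_mid 0) by apply/inT/in_midpoints; exists 0%N.
  apply: (disj _ _ T_mid); exists ord0; apply: chord_mid_in (convS ord0) _ _.
  + by rewrite -(fintype.ord1 i0).
  + by rewrite -(fintype.ord1 i1).
Qed.

Lemma separable_missing_vertex (j : nat) (P' Q' : {fset V}) :
  P' `<=` midpoints -> Q' `<=` vertices -> (j < n)%N -> vertex j \notin Q' ->
  separable 1 2 P' Q'.
Proof.
move=> sP sQ hj vjQ.
pose wedge (x : V) := lin (phiL j) x <= threshold /\ lin (phiR j) x <= threshold.
pose beyondL (x : V) := threshold < lin (phiL j) x.
pose beyondR (x : V) := threshold < lin (phiR j) x.
exists (fun _ => wedge), (fun i : 'I_2 => if i == ord0 then beyondL else beyondR).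
split; first by move=> _; apply: convex_setI; apply: convex_le; exact: lin_affine.
split; first by move=> i; case: (i == ord0); apply: convex_gt; exact: lin_affine.
split=> /=.
  move=> x [_ [hL hR]] [i]; case: (i == ord0) => h.
  - by have := lt_le_trans h hL; rewrite ltxx.
  - by have := lt_le_trans h hR; rewrite ltxx.
left; split=> x hx.
- have /in_midpoints [k _ ->] := fsubsetP sP x hx.
  by exists ord0; split; exact: lin_chord_mid_le.
- have /in_vertices [i hi ex] := fsubsetP sQ x hx.
  have hij : i != j by apply: contraNneq vjQ => e; rewrite -e -ex.
  by case: (vertex_beyond_wedge hi hj hij) => h; [exists ord0 | exists ord_max];
    rewrite /= ex.
Qed.

Lemma separable_small (P' Q' : {fset V}) :
  P' `<=` midpoints -> Q' `<=` vertices -> (#|` Q'| < n)%N -> separable 1 2 P' Q'.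
Proof.
move=> sP sQ small.
have : ~~ (vertices `<=` Q').
  by apply/negP => /fsubset_leq_card; rewrite card_vertices; lia.
case/fsubsetPn => x /in_vertices [j hj ->]; exact: separable_missing_vertex.
Qed.
End Construction.

Lemma not_helly_type (R : realType) (d : nat) (F : {fset 'rV[R]_d} -> {fset 'rV[R]_d} -> Prop) :
  (forall N : nat, exists P Q : {fset 'rV[R]_d}, ~ F P Q /\
     (forall P' Q', (P' `<=` P)%fset -> (Q' `<=` Q)%fset ->
        (#|` P'| + #|` Q'| <= N)%N -> F P' Q')) ->
  ~ helly_type F.
Proof.
move=> unbounded [N helly]; have [P [Q [notF small]]] := unbounded N.
have [P' [Q' [sP [sQ [card notF']]]]] := helly P Q notF.
exact: notF' (small P' Q' sP sQ card).
Qed.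

Local Open Scope fset_scope.

Theorem mainTheorem7 (R : realType) (d : nat) (hd : (2 <= d)%N) :
  (forall N : nat, exists P Q : {fset 'rV[R]_d},
     ~ separable 1 2 P Q /\
     (forall P' Q' : {fset 'rV[R]_d}, P' `<=` P -> Q' `<=` Q ->
        (#|` P'| + #|` Q'| <= N)%N -> separable 1 2 P' Q')) /\
  ~ helly_type (@separable R d 1 2).
Proof.
case: d hd => [|[|d']] // _.
have counterexamples : forall N : nat, exists P Q : {fset 'rV[R]_(d'.+2)},
    ~ separable 1 2 P Q /\
    (forall P' Q' : {fset 'rV[R]_(d'.+2)}, P' `<=` P -> Q' `<=` Q ->
       (#|` P'| + #|` Q'| <= N)%N -> separable 1 2 P' Q').
  move=> N; exists (midpoints R d' N), (vertices R d' N); split; first exact: not_separable_midpoints_vertices.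
  by move=> P' Q' sP sQ card; apply: separable_small => //; lia.
by split; last exact: not_helly_type.
Qed.
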